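(* Let $T\in\mathbb{T}$ have a positive weight on each edge, and let $A$ be its adjacency matrix. Then there exists a signature matrix $S$ such that $SA^{\#}S$ is a nonnegative matrix.
   Context: $\mathbb{T}$ is the class of simple undirected weighted trees $T$ such that (i) $T$ has at least one non-pendant vertex, and (ii) every non-pendant vertex of $T$ is adjacent to at least one pendant vertex (a vertex of degree one). The adjacency matrix $A$ has $(i,j)$ entry equal to the weight of edge $v_iv_j$, or $0$ if no edge; $A^{\#}$ is its group inverse (unique $X$ with $AXA=A$, $XAX=X$, $AX=XA$). A signature matrix is a diagonal matrix with diagonal entries in $\{1,-1\}$. *)

From HB Require Import structures.
From mathcomp Require Import all_boot all_order all_algebra.
Set Implicit Arguments. Unset Strict Implicit. Unset Printing Implicit Defensive.
Import Order.TTheory GRing.Theory Num.Theory.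
Local Open Scope ring_scope.

Definition simple_graph (n : nat) (e : rel 'I_n) : Prop :=
  (forall i, ~~ e i i) /\ (forall i j, e i j = e j i).

Definition num_edges (n : nat) (e : rel 'I_n) : nat :=
  #|[set p : 'I_n * 'I_n | (p.1 < p.2)%N && e p.1 p.2]|.

Definition is_tree (n : nat) (e : rel 'I_n) : Prop :=
  [/\ simple_graph e, (forall i j, connect e i j) & num_edges e = n.-1].

Definition degree (n : nat) (e : rel 'I_n) (i : 'I_n) : nat := #|[set j | e i j]|.

Definition pendant (n : nat) (e : rel 'I_n) (i : 'I_n) : bool := degree e i == 1%N.

Definition in_class_T (n : nat) (e : rel 'I_n) : Prop :=
  [/\ is_tree e,
      exists i, ~~ pendant e i
    & forall i, ~~ pendant e i -> exists j, e i j && pendant e j].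

Definition adjacency (R : ringType) (n : nat) (e : rel 'I_n) (w : 'I_n -> 'I_n -> R)
  : 'M[R]_n := \matrix_(i, j) (if e i j then w i j else 0).

Definition group_inverse (R : ringType) (n : nat) (A X : 'M[R]_n) : Prop :=
  [/\ A *m X *m A = A, X *m A *m X = X & A *m X = X *m A].

Definition signature_matrix (R : ringType) (n : nat) (S : 'M[R]_n) : Prop :=
  exists d : 'rV[R]_n, S = diag_mx d /\ forall j, d 0 j = 1 \/ d 0 j = -1.

Definition nonneg_matrix (R : numDomainType) (n : nat) (M : 'M[R]_n) : Prop :=
  forall i j, 0 <= M i j.

From HB Require Import structures.
From mathcomp Require Import all_boot all_order all_algebra.
Set Implicit Arguments. Unset Strict Implicit. Unset Printing Implicit Defensive.
Import Order.TTheory GRing.Theory Num.Theory.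
Local Open Scope ring_scope.

(** Split the vertices into pendant ones (projector [p]) and the others
    ([q = 1 - p]).  Pendant vertices are pairwise non-adjacent, so [A] is the sum
    of its blocks [B = q A q], [C = q A p] and [C' = p A q]; every pendant vertex
    has a single neighbour and every other vertex has a pendant one, so
    [D = C C'] is diagonal and invertible on the non-pendant vertices.  Then
    [X = E + E' - E' B E] with [E = D^-1 C] and [E' = C' D^-1] is the group
    inverse of [A], by a computation valid in any ring.  Colour the tree properly
    by [c] and put [t i = (-1)^(c i + [i pendant])]: then [t i t j = 1] on edges
    with a pendant end and [-1] on the other edges, so [S E S], [S E' S] and
    [- S B S] are nonnegative, and so is [S X S = SES + SE'S + SE'S (-SBS) SES].
    The colouring comes from a nonzero [v] with [v i = - v j] on every edge,
    which exists because the signless incidence matrix has fewer columns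
    (edges) than rows (vertices); connectivity makes [|v|] constant, so the
    sign of [v] is a proper colouring. *)

Lemma group_inverse_unique (R : nzRingType) n (A X Y : 'M[R]_n) :
  group_inverse A X -> group_inverse A Y -> X = Y.
Proof.
case=> AXA XAX AX_XA [AYA YAY AY_YA].
have AX_AY : A *m X = A *m Y.
  by rewrite -{1}AYA -(mulmxA (A *m Y)) AY_YA AX_XA -!mulmxA (mulmxA A X) AXA.
by rewrite -XAX -mulmxA AX_AY mulmxA -AX_XA AX_AY AY_YA YAY.
Qed.

Section CornerGroupInverse.
Variables (Rg : pzRingType) (a p dinv : Rg).

Local Notation q := (1 - p).
Local Notation d := (q * a * p * a * q).

Definition corner_ginv :=
  dinv * a * p + p * a * dinv - p * a * dinv * (q * a * q) * (dinv * a * p).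
Local Notation x := corner_ginv.

Hypothesis p_idem : p * p = p.
Hypothesis pap0 : p * a * p = 0.
Hypothesis qdinv : q * dinv = dinv.
Hypothesis d_dinv : d * dinv = q.
Hypothesis dinv_d : dinv * d = q.

Let pq0 : p * q = 0. Proof. by rewrite mulrBr mulr1 p_idem subrr. Qed.
Let qp0 : q * p = 0. Proof. by rewrite mulrBl mul1r p_idem subrr. Qed.
Let qq : q * q = q. Proof. by rewrite mulrBl mul1r pq0 subr0. Qed.
Let subq y : y - y * q = y * p. Proof. by rewrite mulrBr mulr1 subKr. Qed.
Let aqa : a - q * a = p * a. Proof. by rewrite mulrBl mul1r subKr. Qed.
Let qap : q * a * p = a * p. Proof. by rewrite !mulrBl !mul1r pap0 subr0. Qed.
Let paq : p * (a * q) = p * a.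
Proof. by rewrite mulrBr mulr1 mulrBr mulrA pap0 subr0. Qed.
Let dinvq : dinv * q = dinv.
Proof. by rewrite -[in LHS]d_dinv mulrA dinv_d qdinv. Qed.
Let pdinv0 : p * dinv = 0. Proof. by rewrite -qdinv mulrA pq0 mul0r. Qed.

Let e := dinv * a * p.
Let e' := p * a * dinv.
Let B := q * a * q.

Let ae' : a * e' = q. Proof. by rewrite /e' !mulrA -qap -qdinv !mulrA d_dinv. Qed.
Let ea : e * a = q. Proof. by rewrite /e -dinv_d qap -!mulrA paq. Qed.
Let qe : q * e = e. Proof. by rewrite /e !mulrA qdinv. Qed.
Let qe' : q * e' = 0. Proof. by rewrite /e' !mulrA qp0 !mul0r. Qed.
Let qB : q * B = B. Proof. by rewrite /B !mulrA qq. Qed.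
Let Bq : B * q = B. Proof. by rewrite /B -mulrA qq. Qed.
Let Be : B * e = q * a * e. Proof. by rewrite /B -mulrA qe. Qed.
Let e'B : e' * B = e' * a * q.
Proof. by rewrite /B /e' !mulrA -(mulrA _ dinv) dinvq. Qed.
Let e'ap : e' * a * p = p * a * e. Proof. by rewrite /e /e' !mulrA. Qed.
Let ee : e * e = 0.
Proof. by rewrite /e !mulrA -(mulrA _ p dinv) pdinv0 mulr0 !mul0r. Qed.
Let ee' : e * e' = dinv.
Proof. by rewrite /e /e' !mulrA -(mulrA _ p p) p_idem -/e ea qdinv. Qed.

(* [clearbody] stops [mulrA] from unfolding [e], [e'] and [B]. *)
Let ax : a * x = q + p * a * e.
Proof.
rewrite /corner_ginv -/e -/e' -/B; clearbody e e' B.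
by rewrite mulrBr mulrDr !mulrA ae' qB Be addrAC -mulrBl aqa addrC.
Qed.

Let xa : x * a = q + p * a * e.
Proof.
rewrite /corner_ginv -/e -/e' -/B; clearbody e e' B.
by rewrite mulrBl mulrDl ea -[e' * B * e * a]mulrA ea -mulrA Bq e'B -addrA subq e'ap.
Qed.

Let qx : q * x = e.
Proof.
rewrite /corner_ginv -/e -/e' -/B; clearbody e e' B.
by rewrite mulrBr mulrDr qe qe' !mulrA qe' !mul0r subr0 addr0.
Qed.

Let ex : e * x = dinv - dinv * B * e.
Proof.
rewrite /corner_ginv -/e -/e' -/B; clearbody e e' B.
by rewrite mulrBr mulrDr ee ee' !mulrA ee' add0r.
Qed.

Lemma corner_ginv_group_inverse :
  [/\ a * x * a = a, x * a * x = x & a * x = x * a].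
Proof.
split; last by rewrite ax xa.
- rewrite ax mulrDl; clearbody e.
  by rewrite -mulrA ea -mulrA paq -mulrDl subrK mul1r.
- rewrite xa mulrDl qx -mulrA ex /corner_ginv -/e -/B; clearbody e B.
  by rewrite mulrBr !mulrA -/e' addrA.
Qed.

End CornerGroupInverse.

Lemma nonneg_matrixD (R : numDomainType) n (M N : 'M[R]_n) :
  nonneg_matrix M -> nonneg_matrix N -> nonneg_matrix (M + N).
Proof. by move=> M_ge0 N_ge0 i j; rewrite mxE addr_ge0. Qed.

Lemma nonneg_matrixM (R : numDomainType) n (M N : 'M[R]_n) :
  nonneg_matrix M -> nonneg_matrix N -> nonneg_matrix (M *m N).
Proof. by move=> M_ge0 N_ge0 i j; rewrite mxE sumr_ge0 // => k _; rewrite mulr_ge0. Qed.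

Lemma mul_diag_mx_diagE (R : pzSemiRingType) m n (d : 'rV[R]_m) (M : 'M[R]_(m, n))
    d' i j :
  (diag_mx d *m M *m diag_mx d') i j = d 0 i * M i j * d' 0 j.
Proof. by rewrite mul_mx_diag mul_diag_mx !mxE. Qed.

Section DiagPseudoInverse.
Variables (F : fieldType) (n : nat) (f : 'I_n -> F).

Local Notation dg := (diag_mx (\row_i f i)).
Local Notation dg_inv := (diag_mx (\row_i (f i)^-1)).
Local Notation dg_supp := (diag_mx (\row_i (f i != 0)%:R)).

Lemma diag_mx_mulV : dg *m dg_inv = dg_supp.
Proof.
rewrite mulmx_diag; congr diag_mx; apply/rowP => i; rewrite !mxE.
by case: eqVneq => [->|/mulfV//]; rewrite mul0r.
Qed.

Lemma diag_mx_mulVl : dg_inv *m dg = dg_supp.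
Proof.
rewrite mulmx_diag; congr diag_mx; apply/rowP => i; rewrite !mxE.
by case: eqVneq => [->|/mulVf//]; rewrite mulr0.
Qed.

Lemma diag_mx_supp_mulV : dg_supp *m dg_inv = dg_inv.
Proof.
rewrite mulmx_diag; congr diag_mx; apply/rowP => i; rewrite !mxE.
by case: eqVneq => [->|]; rewrite ?invr0 ?mulr0 ?mul1r.
Qed.

End DiagPseudoInverse.

Lemma pendant_neighbor_unique n (e : rel 'I_n) u a b :
  pendant e u -> e u a -> e u b -> a = b.
Proof.
rewrite /pendant /degree => /cards1P[x Nu] eua eub.
have : a \in [set j | e u j] by rewrite inE.
have : b \in [set j | e u j] by rewrite inE.
by rewrite Nu !inE => /eqP-> /eqP->.
Qed.

Lemma pendants_nonadjacent n (e : rel 'I_n) r u v :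
  (forall i j, e i j = e j i) -> (forall i j, connect e i j) ->
  ~~ pendant e r -> pendant e u -> pendant e v -> e u v = false.
Proof.
move=> e_sym e_conn npr pu pv; apply/negbTE/negP => euv.
have nbr x y : x \in [:: u; v] -> e x y -> y \in [:: u; v].
  rewrite !inE => /orP[]/eqP-> exy.
    by rewrite (pendant_neighbor_unique pu exy euv) eqxx orbT.
  by rewrite e_sym in euv; rewrite (pendant_neighbor_unique pv exy euv) eqxx.
have uv_closed : closed e [:: u; v].
  by move=> x y exy; apply/idP/idP => [/nbr|/nbr]; apply; rewrite // e_sym.
have := closed_connect uv_closed (e_conn u r).
by rewrite !inE eqxx => /esym/orP[]/eqP rE; rewrite rE ?pu ?pv in npr.
Qed.

Lemma signless_incidence_kernel (F : fieldType) n (e : rel 'I_n) :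
  (num_edges e < n)%N ->
  exists2 v : 'rV[F]_n, v != 0 & forall i j : 'I_n, (i < j)%N -> e i j -> v 0 i = - v 0 j.
Proof.
set E := [set p : 'I_n * 'I_n | (p.1 < p.2)%N && e p.1 p.2] => ltEn.
pose M := \matrix_(i < n, k < #|E|)
  (((enum_val k).1 == i)%:R + ((enum_val k).2 == i)%:R : F).
have /rowV0Pn[v /sub_kermxP vM v0] : kermx M != 0.
  by rewrite -mxrank_eq0 mxrank_ker subn_eq0 -ltnNge (leq_ltn_trans (rank_leq_col M)).
exists v => // i j ltij eij.
have Eij : (i, j) \in E by rewrite inE /= ltij eij.
have pick x : \sum_k v 0 k * (x == k)%:R = v 0 x.
  rewrite (bigD1 x) //= eqxx mulr1 big1 ?addr0 // => k.
  by rewrite eq_sym => /negbTE->; rewrite mulr0.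
apply/eqP; rewrite -addr_eq0 -pick -(pick j) -big_split /=.
have := congr1 (fun m : 'rV_#|E| => m 0 (enum_rank_in Eij (i, j))) vM.
rewrite !mxE => vM0; apply/eqP; rewrite -[RHS]vM0; apply: eq_bigr => k _.
by rewrite mxE (enum_rankK_in Eij Eij) mulrDr.
Qed.

Lemma tree_bipartite n (e : rel 'I_n) :
  is_tree e -> exists c : 'I_n -> bool, forall i j, e i j -> c i != c j.
Proof.
case: n e => [|n] e [[e_irr e_sym] e_conn nE]; first by exists xpred0 => -[].
have [|v v0 vE] := @signless_incidence_kernel rat _ e; first by rewrite nE.
have vE' i j : e i j -> v 0 i = - v 0 j.
  case: (ltngtP i j) => [ltij|ltji|/val_inj->] eij; first exact: vE.
    by rewrite (vE _ _ ltji) ?opprK // e_sym.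
  by rewrite (negbTE (e_irr j)) in eij.
have [k vk] : exists k, v 0 k != 0.
  apply/existsP; apply: contraNT v0 => /existsPn v0'; apply/eqP/rowP => k.
  by rewrite mxE; apply/eqP/negPn/v0'.
have v_nz i : v 0 i != 0.
  have abs_closed : closed e [pred x | `|v 0 x| == `|v 0 k|].
    by move=> x y /vE' vxy; rewrite !inE vxy normrN.
  have := closed_connect abs_closed (e_conn k i).
  by rewrite !inE eqxx => /esym/eqP vik; rewrite -normr_eq0 vik normr_eq0.
exists (fun i => 0 < v 0 i) => i j /vE'->; rewrite oppr_gt0.
by case: ltrgtP (v_nz j).
Qed.

Section PendantBipartite.
Variables (R : realFieldType) (n : nat) (e : rel 'I_n) (w : 'I_n -> 'I_n -> R).
Hypothesis e_sym : forall i j, e i j = e j i.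
Hypothesis pendant_nonadj : forall u v, pendant e u -> pendant e v -> e u v = false.
Hypothesis pendant_nbr : forall i, ~~ pendant e i -> exists u, e i u && pendant e u.
Hypothesis w_gt0 : forall i j, e i j -> 0 < w i j.

Local Notation A := (adjacency e w).

Definition pendant_proj : 'M[R]_n := diag_mx (\row_i (pendant e i)%:R).
Local Notation P := pendant_proj.
Local Notation D := ((1 - P) * A * P * A * (1 - P)).

Lemma one_sub_pendant_proj : 1 - P = diag_mx (\row_i (~~ pendant e i)%:R).
Proof.
apply/matrixP => i j; rewrite !mxE.
by case: eqVneq => [->|]; case: pendant; rewrite ?subrr ?subr0.
Qed.

Lemma pendant_gram_entry i j :
  D i j = (~~ pendant e i)%:R * (~~ pendant e j)%:R *
          \sum_(k | pendant e k) A i k * A k j.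
Proof.
rewrite one_sub_pendant_proj -!mulmxE !mul_mx_diag !mul_diag_mx !mxE mulrC.
rewrite [X in _ = _ * X]big_mkcond !mulr_sumr; apply: eq_bigr => k _; rewrite !mxE.
case: (pendant e k); last by rewrite mulr0 mul0r !mulr0.
by rewrite mulr1 mulrCA !mulrA [in RHS](mulrAC _ (~~ pendant e j)%:R).
Qed.

Lemma adjacency_ge0 : nonneg_matrix A.
Proof. by move=> i j; rewrite mxE; case: ifP => // /w_gt0/ltW. Qed.

Lemma pendant_gram_ge0 i : 0 <= D i i.
Proof.
rewrite pendant_gram_entry !mulr_ge0 ?ler0n ?sumr_ge0 // => k _.
by rewrite mulr_ge0 ?adjacency_ge0.
Qed.

Lemma pendant_gram_offdiag i j : i != j -> D i j = 0.
Proof.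
move=> neq_ij; rewrite pendant_gram_entry big1 ?mulr0 // => k pk; rewrite !mxE.
case: ifP => eik; last by rewrite mul0r.
case: ifP => ekj; last by rewrite mulr0.
by rewrite e_sym in eik; rewrite (pendant_neighbor_unique pk eik ekj) eqxx in neq_ij.
Qed.

Lemma pendant_gram_eq0 i : (D i i == 0) = pendant e i.
Proof.
rewrite pendant_gram_entry.
case: (boolP (pendant e i)) => [_ | npi] /=; first by rewrite !mul0r eqxx.
have [u /andP[eiu pu]] := pendant_nbr npi.
rewrite !mul1r (bigD1 u) //= gt_eqF //; apply: ltr_wpDr.
  by rewrite sumr_ge0 // => k _; rewrite mulr_ge0 ?adjacency_ge0.
by rewrite !mxE eiu e_sym eiu mulr_gt0 ?w_gt0 // e_sym.
Qed.

Lemma pendant_gram_diag : D = diag_mx (\row_i D i i).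
Proof.
apply/matrixP => i j; rewrite [in RHS]mxE [in RHS]mxE.
by case: eqVneq => [->|/pendant_gram_offdiag->]; rewrite ?mulr1n ?mulr0n.
Qed.

Lemma one_sub_pendant_proj_supp : 1 - P = diag_mx (\row_i (D i i != 0)%:R).
Proof.
rewrite [LHS]one_sub_pendant_proj; congr diag_mx; apply/rowP => i.
by rewrite [LHS]mxE [RHS]mxE pendant_gram_eq0.
Qed.

(* At a pendant vertex [D i i = 0], and the entry of [Dinv] is [0^-1 = 0]. *)
Local Notation Dinv := (diag_mx (\row_i (D i i)^-1)).

Lemma adjacency_group_inverse : group_inverse A (corner_ginv A P Dinv).
Proof.
rewrite /group_inverse !mulmxE; apply: corner_ginv_group_inverse.
- rewrite -mulmxE mulmx_diag; congr diag_mx; apply/rowP => i; rewrite !mxE.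
  by rewrite -natrM mulnb andbb.
- apply/matrixP => i j; rewrite -!mulmxE mul_mx_diag mul_diag_mx !mxE.
  case: ifP => [eij|_]; last by rewrite mulr0 mul0r.
  have: ~~ (pendant e i && pendant e j).
    by apply/andP => -[pi pj]; rewrite pendant_nonadj in eij.
  by case: (pendant e i); case: (pendant e j) => //= _; rewrite mulr0n ?mul0r ?mulr0.
- by rewrite {1}one_sub_pendant_proj_supp -mulmxE diag_mx_supp_mulV.
- rewrite [X in X * _]pendant_gram_diag -mulmxE diag_mx_mulV.
  exact/esym/one_sub_pendant_proj_supp.
- rewrite [X in _ * X]pendant_gram_diag -mulmxE diag_mx_mulVl.
  exact/esym/one_sub_pendant_proj_supp.
Qed.

Variable c : 'I_n -> bool.
Hypothesis c_edge : forall i j, e i j -> c i != c j.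

Local Notation t i := ((-1) ^+ (c i (+) pendant e i) : R).

Definition pendant_signature : 'M[R]_n := diag_mx (\row_i t i).
Local Notation S := pendant_signature.

Lemma signature_matrix_pendant_signature : signature_matrix S.
Proof.
exists (\row_i t i); split => // j; rewrite mxE.
by case: (_ (+) _); [right | left]; rewrite ?expr1 ?expr0.
Qed.

Lemma pendant_signature_sqr : S * S = 1.
Proof.
rewrite -mulmxE mulmx_diag -idmxE -diag_const_mx; congr diag_mx.
by apply/rowP => i; rewrite !mxE -signr_addb addbb.
Qed.

Lemma pendant_sign_edge i j :
  e i j -> t i * t j = - (-1) ^+ (pendant e i (+) pendant e j).
Proof.
by move=> eij; rewrite -signr_addb addbACA -(negb_eqb (c i)) c_edge // addTb signrN.
Qed.

Lemma signature_conj_diag_adj_pendant_ge0 (d : 'rV[R]_n) : (forall i, 0 <= d 0 i) ->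
  nonneg_matrix (S * (diag_mx d * A * P) * S).
Proof.
move=> d_ge0 i j; rewrite -!mulmxE !mul_diag_mx_diagE !mxE.
case: ifP => eij; last by rewrite !(mulr0, mul0r).
rewrite mulrAC pendant_sign_edge //.
case: (boolP (pendant e j)) => [pj|_]; last by rewrite mulr0n !mulr0.
have -> : pendant e i = false by apply: contraTF eij => /pendant_nonadj->.
rewrite expr1 opprK mul1r mulr1.
by rewrite mulr_ge0 // ltW // w_gt0.
Qed.

Lemma signature_conj_pendant_adj_diag_ge0 (d : 'rV[R]_n) : (forall i, 0 <= d 0 i) ->
  nonneg_matrix (S * (P * A * diag_mx d) * S).
Proof.
move=> d_ge0 i j; rewrite -!mulmxE !mul_diag_mx_diagE !mxE.
case: ifP => eij; last by rewrite !(mulr0, mul0r).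
rewrite mulrAC pendant_sign_edge //.
case: (boolP (pendant e i)) => [pi|_]; last by rewrite mulr0n !mul0r mulr0.
have -> : pendant e j = false by apply: contraTF eij => /(pendant_nonadj pi)->.
rewrite expr1 opprK !mul1r.
by rewrite mulr_ge0 // ltW // w_gt0.
Qed.

Lemma signature_conj_nonpendant_block_le0 :
  nonneg_matrix (- (S * ((1 - P) * A * (1 - P)) * S)).
Proof.
move=> i j; rewrite one_sub_pendant_proj -!mulmxE mxE !mul_diag_mx_diagE !mxE.
case: ifP => eij; last by rewrite !(mulr0, mul0r) oppr0.
rewrite mulrAC pendant_sign_edge //.
case: (boolP (pendant e i)) => [_|_] /=; first by rewrite mulr0n !mul0r mulr0 oppr0.
case: (boolP (pendant e j)) => [_|_] /=; first by rewrite mulr0n !mulr0 oppr0.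
by rewrite expr0 mulN1r opprK !mul1r mulr1 ltW // w_gt0.
Qed.

Lemma pendant_signature_conj_ginv_ge0 : nonneg_matrix (S * corner_ginv A P Dinv * S).
Proof.
have conjM M N : S * (M * N) * S = S * M * S * (S * N * S).
  by rewrite !mulrA -(mulrA _ S S) pendant_signature_sqr mulr1.
have Dinv_ge0 i : 0 <= (\row_i (D i i)^-1) 0 i by rewrite mxE invr_ge0 pendant_gram_ge0.
rewrite /corner_ginv; set E := Dinv * A * P; set E' := P * A * Dinv.
rewrite mulrBr mulrDr mulrBl mulrDl (conjM (E' * _)) conjM -mulNr -mulrN.
have SES_ge0 : nonneg_matrix (S * E * S) by exact: signature_conj_diag_adj_pendant_ge0.
have SE'S_ge0 : nonneg_matrix (S * E' * S) by exact: signature_conj_pendant_adj_diag_ge0.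
apply: nonneg_matrixD; first exact: nonneg_matrixD.
apply: nonneg_matrixM SES_ge0.
exact: nonneg_matrixM SE'S_ge0 signature_conj_nonpendant_block_le0.
Qed.

End PendantBipartite.

Theorem theorem3p8 (R : realFieldType) (n : nat) (e : rel 'I_n)
    (w : 'I_n -> 'I_n -> R) :
  in_class_T e ->
  (forall i j, e i j -> w i j = w j i) ->
  (forall i j, e i j -> 0 < w i j) ->
  (exists X, group_inverse (adjacency e w) X) /\
  exists S : 'M[R]_n, signature_matrix S /\
    forall X, group_inverse (adjacency e w) X -> nonneg_matrix (S *m X *m S).
Proof.
(* The weights need not be symmetric. *)
move=> [tree [r npr] pendant_nbr] _ w_gt0.
have [[_ e_sym] e_conn _] := tree.
have [c c_edge] := tree_bipartite tree.
have pendant_nonadj u v := @pendants_nonadjacent _ e r u v e_sym e_conn npr.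
have ginv := adjacency_group_inverse e_sym pendant_nonadj pendant_nbr w_gt0.
split; first by eexists; exact: ginv.
exists (pendant_signature R e c); split; first exact: signature_matrix_pendant_signature.
move=> X /(group_inverse_unique ginv) <-; rewrite !mulmxE.
exact: pendant_signature_conj_ginv_ge0.
Qed.
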